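(* If $A\subseteq\mathbb{N}$ is quasicreative, then $\overline{A}=\mathbb{N}\setminus A$ contains an infinite recursively enumerable subset.
   Context: $\varphi_0,\varphi_1,\ldots$ is a standard acceptable enumeration of the partial computable functions $\mathbb{N}\to\mathbb{N}$ and $\mathcal{W}_e=\operatorname{dom}\varphi_e$. $\mathfrak{P}_{\mathrm{fin}}(\mathbb{N})$ is the set of finite subsets of $\mathbb{N}$; $f\colon\mathbb{N}\to\mathfrak{P}_{\mathrm{fin}}(\mathbb{N})$ is computable if $e\mapsto$ (canonical index of $f(e)$) is computable. A recursively enumerable $A$ is quasicreative if there is a computable $f\colon\mathbb{N}\to\mathfrak{P}_{\mathrm{fin}}(\mathbb{N})$ such that for all $e$, if $\mathcal{W}_e\subseteq\overline{A}$ then $f(e)\subseteq\overline{A}$ and there is $z\in f(e)$ with $z\in\overline{A}\setminus\mathcal{W}_e$. *)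

(* A concrete model of partial computable functions:
   unary partial recursive functions on nat (with Cantor pairing),
   given by syntax trees, a big-step semantics, and a Goedel numbering. *)
From Stdlib Require Import Arith.

Definition cpair (x y : nat) : nat := (x + y) * (x + y + 1) / 2 + y.

Inductive prog : Type :=
| PZero
| PSucc
| PId
| PFst
| PSnd
| PComp (f g : prog)
| PPair (f g : prog)
| PRec (f g : prog)
| PMu (f : prog).

Inductive eval : prog -> nat -> nat -> Prop :=
| ev_zero x : eval PZero x 0
| ev_succ x : eval PSucc x (S x)
| ev_id x : eval PId x x
| ev_fst a b : eval PFst (cpair a b) a
| ev_snd a b : eval PSnd (cpair a b) b
| ev_comp f g x y z : eval g x y -> eval f y z -> eval (PComp f g) x z
| ev_pair f g x y z : eval f x y -> eval g x z -> eval (PPair f g) x (cpair y z)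
| ev_rec0 f g x y : eval f x y -> eval (PRec f g) (cpair x 0) y
| ev_recS f g x n y z :
    eval (PRec f g) (cpair x n) y -> eval g (cpair x (cpair n y)) z ->
    eval (PRec f g) (cpair x (S n)) z
| ev_mu f x n :
    eval f (cpair x n) 0 ->
    (forall m, m < n -> exists k, eval f (cpair x m) (S k)) ->
    eval (PMu f) x n.

Fixpoint code (p : prog) : nat :=
  match p with
  | PZero => cpair 0 0
  | PSucc => cpair 1 0
  | PId => cpair 2 0
  | PFst => cpair 3 0
  | PSnd => cpair 4 0
  | PComp f g => cpair 5 (cpair (code f) (code g))
  | PPair f g => cpair 6 (cpair (code f) (code g))
  | PRec f g => cpair 7 (cpair (code f) (code g))
  | PMu f => cpair 8 (code f)
  end.

(* phi e x y : phi_e(x) is defined and equals y.  Numbers that are not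
   codes of programs index the empty function. *)
Definition phi (e x y : nat) : Prop := exists p, code p = e /\ eval p x y.

Definition W (e : nat) : nat -> Prop := fun x => exists y, phi e x y.

Definition re (A : nat -> Prop) : Prop := exists e, forall x, A x <-> W e x.

Definition computable (g : nat -> nat) : Prop :=
  exists e, forall x, phi e x (g x).

(* Canonical finite set with canonical index n: D_n = { z | bit z of n is 1 }. *)
Definition D (n : nat) : nat -> Prop := fun z => Nat.odd (n / 2 ^ z) = true.

(* f : N -> P_fin(N) is given by the computable map g of canonical indices,
   f(e) = D_(g e). *)
Definition quasicreative (A : nat -> Prop) : Prop :=
  re A /\
  exists g : nat -> nat, computable g /\
    forall e, (forall x, W e x -> ~ A x) ->
      (forall z, D (g e) z -> ~ A z) /\
      (exists z, D (g e) z /\ ~ A z /\ ~ W e z).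

Definition infinite_set (B : nat -> Prop) : Prop :=
  forall n, exists x, n <= x /\ B x.

From Stdlib Require Import Arith Lia List ConstructiveEpsilon.
Import ListNotations.

(* Let f = D o g be the map witnessing quasicreativity.  Build indices
   e_0, e_1, ... with W_(e_n) the union of f(e_j) for j < n.  By induction
   on n, W_(e_n) lies in the complement of A, so f(e_n) does too and contains
   a point outside W_(e_n).  The union B of all f(e_n) is therefore a subset
   of the complement of A gaining a new element at every stage, hence
   infinite; it is r.e. because e_(n+1) is computed from the list
   g(e_0), ..., g(e_n) by a program that writes down the code of the
   union-enumerating program (an explicit s-m-n step). *)

Fixpoint tri (s : nat) : nat := match s with 0 => 0 | S s => tri s + S s end.

Lemma tri_spec s : s * (s + 1) / 2 = tri s.
Proof.
  induction s as [|s IH]; [reflexivity|].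
  cbn [tri]. rewrite <- IH.
  replace (S s * (S s + 1)) with (s * (s + 1) + S s * 2) by lia.
  rewrite Nat.div_add by lia. reflexivity.
Qed.

Lemma cpair_tri x y : cpair x y = tri (x + y) + y.
Proof. unfold cpair. rewrite tri_spec. reflexivity. Qed.

Lemma tri_monotone s s' : s <= s' -> tri s <= tri s'.
Proof. induction 1; cbn [tri]; lia. Qed.

Lemma cpair_inj x y x' y' : cpair x y = cpair x' y' -> x = x' /\ y = y'.
Proof.
  rewrite !cpair_tri. intro H.
  assert (Hsum : x + y = x' + y').
  { destruct (Nat.lt_total (x + y) (x' + y')) as [h|[h|h]]; auto.
    - pose proof (tri_monotone (S (x + y)) (x' + y') h). cbn [tri] in *. lia.
    - pose proof (tri_monotone (S (x' + y')) (x + y) h). cbn [tri] in *. lia. }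
  rewrite Hsum in H. lia.
Qed.

Lemma cpair_0_0 : cpair 0 0 = 0.
Proof. reflexivity. Qed.

Opaque cpair.

Lemma code_inj p q : code p = code q -> p = q.
Proof.
  revert q; induction p; destruct q; cbn [code]; intro H;
  apply cpair_inj in H; destruct H as [H1 H2]; try discriminate; auto;
  try (apply cpair_inj in H2; destruct H2 as [H2 H3]); f_equal; auto.
Qed.

Lemma eval_functional p : forall x y, eval p x y -> forall y', eval p x y' -> y = y'.
Proof.
  induction p; intros x y H y' H'.
  1-3: inversion H; inversion H'; subst; auto.
  1-2: inversion H; subst; inversion H'; subst;
       match goal with h : cpair _ _ = cpair _ _ |- _ =>
         apply cpair_inj in h; destruct h; subst; auto end.
  - inversion H; subst. inversion H'; subst.
    assert (y0 = y1) by (eapply IHp2; eauto). subst. eapply IHp1; eauto.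
  - inversion H; subst. inversion H'; subst.
    f_equal; [eapply IHp1|eapply IHp2]; eauto.
  - remember (PRec p1 p2) as q. revert y' H'.
    induction H; inversion Heqq; subst; intros y' H';
    inversion H'; subst;
    match goal with h : cpair _ _ = cpair _ _ |- _ =>
      apply cpair_inj in h; destruct h as [? h]; subst end;
    try discriminate.
    + eapply IHp1; eauto.
    + match goal with h : S _ = S _ |- _ => injection h as <- end.
      assert (y = y0) by (apply IHeval1; auto). subst.
      eapply IHp2; eauto.
  - inversion H as [| | | | | | | | | ? ? ? Ha Hb]; subst.
    inversion H' as [| | | | | | | | | ? ? ? Ha' Hb']; subst.
    destruct (Nat.lt_total y y') as [h|[h|h]]; auto.
    + destruct (Hb' _ h) as [k Hk]. discriminate (IHp _ _ Ha _ Hk).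
    + destruct (Hb _ h) as [k Hk]. discriminate (IHp _ _ Ha' _ Hk).
Qed.

Lemma computable_eval g : computable g -> exists p, forall x, eval p x (g x).
Proof.
  intros [e He]. destruct (He 0) as [p [Hp _]]. exists p. intro x.
  destruct (He x) as [q [Hq Hx]]. rewrite <- Hp in Hq.
  apply code_inj in Hq. subst q. exact Hx.
Qed.

(* The accumulator [h] of a recursion step, whose input is <x, <n, h>>. *)
Definition pacc : prog := PComp PSnd PSnd.

Ltac eval_steps := repeat match goal with
 | |- eval (PComp _ _) _ _ => eapply ev_comp
 | |- eval (PPair _ _) _ _ => eapply ev_pair
 | |- eval pacc _ _ => eapply ev_comp
 | |- eval PFst _ _ => apply ev_fst
 | |- eval PSnd _ _ => apply ev_snd
 | |- eval PId _ _ => apply ev_id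
 | |- eval PSucc _ _ => apply ev_succ
 | |- eval PZero _ _ => apply ev_zero
 end.

Lemma eval_prec f g x (v : nat -> nat) :
  eval f x (v 0) -> (forall n, eval g (cpair x (cpair n (v n))) (v (S n))) ->
  forall n, eval (PRec f g) (cpair x n) (v n).
Proof.
  intros H0 HS n. induction n as [|n IH].
  - now apply ev_rec0.
  - eapply ev_recS; [exact IH|apply HS].
Qed.

Definition piter (f g : prog) : prog := PComp (PRec f g) (PPair PZero PId).

Lemma eval_piter f g (v : nat -> nat) :
  eval f 0 (v 0) -> (forall n, eval g (cpair 0 (cpair n (v n))) (v (S n))) ->
  forall n, eval (piter f g) n (v n).
Proof. intros H0 HS n. eapply ev_comp; [eval_steps|now apply eval_prec]. Qed.

Fixpoint pconst (n : nat) : prog :=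
  match n with 0 => PZero | S n => PComp PSucc (pconst n) end.

Lemma eval_pconst n x : eval (pconst n) x n.
Proof. induction n; cbn [pconst]; eval_steps; eauto. Qed.

Definition padd : prog := PRec PId (PComp PSucc pacc).

Lemma eval_padd a n : eval padd (cpair a n) (n + a).
Proof.
  apply (eval_prec _ _ a (fun n => n + a)); [constructor|].
  intro m. eval_steps.
Qed.

Definition pis_zero : prog := piter (pconst 1) (pconst 0).

Lemma eval_pis_zero n : eval pis_zero n (Nat.b2n (n =? 0)).
Proof.
  apply (eval_piter _ _ (fun n => Nat.b2n (n =? 0))); intros; apply eval_pconst.
Qed.

Lemma div2_odd_succ n :
  Nat.div2 (S n) = Nat.div2 n + Nat.b2n (Nat.odd n) /\
  Nat.b2n (Nat.odd (S n)) = Nat.b2n (Nat.b2n (Nat.odd n) =? 0).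
Proof.
  pose proof (Nat.div2_odd n). pose proof (Nat.div2_odd (S n)).
  rewrite Nat.odd_succ, <- Nat.negb_odd in *.
  destruct (Nat.odd n); simpl in *; split; auto; lia.
Qed.

(* Counts up from 0 = <0, 0>, maintaining <y/2, y mod 2>. *)
Definition phalve : prog :=
  piter PZero (PPair (PComp padd (PPair (PComp PSnd pacc) (PComp PFst pacc)))
                     (PComp pis_zero (PComp PSnd pacc))).

Lemma eval_phalve y : eval phalve y (cpair (Nat.div2 y) (Nat.b2n (Nat.odd y))).
Proof.
  apply (eval_piter _ _ (fun y => cpair (Nat.div2 y) (Nat.b2n (Nat.odd y)))).
  - rewrite <- cpair_0_0 at 2. constructor.
  - intro n. destruct (div2_odd_succ n) as [-> ->]. apply ev_pair.
    + eapply ev_comp; [|apply eval_padd]. eval_steps.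
    + eapply ev_comp; [|apply eval_pis_zero]. eval_steps.
Qed.

Definition pshift : prog := PRec PId (PComp PFst (PComp phalve pacc)).

Lemma eval_pshift d k : eval pshift (cpair d k) (d / 2 ^ k).
Proof.
  apply (eval_prec _ _ d (fun k => d / 2 ^ k)).
  - rewrite Nat.div_1_r. constructor.
  - intro j. eapply ev_comp; [eapply ev_comp; [eval_steps|apply eval_phalve]|].
    replace (d / 2 ^ S j) with (Nat.div2 (d / 2 ^ j)); [apply ev_fst|].
    rewrite Nat.div2_div, Nat.Div0.div_div, Nat.pow_succ_r'. f_equal. lia.
Qed.

(* Outputs 0 iff [x] is in [D d], the convention of [PMu]. *)
Definition pbit_unset : prog := PComp pis_zero (PComp PSnd (PComp phalve pshift)).

Lemma eval_pbit_unset d x :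
  eval pbit_unset (cpair d x) (Nat.b2n (negb (Nat.odd (d / 2 ^ x)))).
Proof.
  replace (Nat.b2n (negb _)) with (Nat.b2n (Nat.b2n (Nat.odd (d / 2 ^ x)) =? 0))
    by now destruct (Nat.odd _).
  eapply ev_comp; [|apply eval_pis_zero].
  eapply ev_comp; [eapply ev_comp; [apply eval_pshift|apply eval_phalve]|apply ev_snd].
Qed.

Fixpoint encode_list (l : list nat) : nat :=
  match l with [] => 0 | d :: l => cpair d (encode_list l) end.

Lemma encode_list_hd_tl l : encode_list l = cpair (hd 0 l) (encode_list (tl l)).
Proof. destruct l; [symmetry; apply cpair_0_0|reflexivity]. Qed.

Lemma skipn_succ_tl {T} k (l : list T) : skipn (S k) l = tl (skipn k l).
Proof. revert l; induction k; intros [|a l]; simpl; auto. apply IHk. Qed.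

Definition pdrop : prog := PRec PId (PComp PSnd pacc).

Lemma eval_pdrop l k : eval pdrop (cpair (encode_list l) k) (encode_list (skipn k l)).
Proof.
  apply (eval_prec _ _ _ (fun k => encode_list (skipn k l))); [constructor|].
  intro j. rewrite skipn_succ_tl, (encode_list_hd_tl (skipn j l)). eval_steps.
Qed.

Definition pnth : prog := PComp PFst pdrop.

Lemma eval_pnth l k : eval pnth (cpair (encode_list l) k) (nth k l 0).
Proof.
  eapply ev_comp; [apply eval_pdrop|].
  replace (nth k l 0) with (hd 0 (skipn k l)).
  - rewrite encode_list_hd_tl. apply ev_fst.
  - revert l; induction k; intros [|a l]; simpl; auto.
Qed.

Lemma W_mu (F : prog) (val : nat -> nat -> bool) :
  (forall x n, eval F (cpair x n) (Nat.b2n (negb (val x n)))) ->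
  forall x, W (code (PMu F)) x <-> exists n, val x n = true.
Proof.
  intros HF x. split.
  - intros [y [p [Hc He]]]. apply code_inj in Hc. subst p.
    inversion He as [| | | | | | | | | ? ? ? Ha Hb]; subst.
    exists y. pose proof (eval_functional _ _ _ Ha _ (HF x y)) as E.
    destruct (val x y); [reflexivity|discriminate].
  - intro Hex.
    destruct (epsilon_smallest (fun n => val x n = true)
                (fun n => Bool.bool_dec (val x n) true) Hex) as [n [Hn Hleast]].
    exists n, (PMu F). split; [reflexivity|]. apply ev_mu.
    + pose proof (HF x n) as E. rewrite Hn in E. exact E.
    + intros m Hm. exists 0. pose proof (HF x m) as E.
      destruct (val x m) eqn:Em; [specialize (Hleast m Em); lia|exact E].
Qed.

Definition punion (c : nat) : prog :=
  PMu (PComp pbit_unset (PPair (PComp pnth (PPair (pconst c) PSnd)) PFst)).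

Lemma D_0 x : ~ D 0 x.
Proof. unfold D. rewrite Nat.Div0.div_0_l. discriminate. Qed.

Lemma W_punion l x : W (code (punion (encode_list l))) x <-> exists d, In d l /\ D d x.
Proof.
  (* Unfolding first stops unification from evaluating the numeral [code _]. *)
  unfold punion. rewrite (W_mu _ (fun x k => Nat.odd (nth k l 0 / 2 ^ x))).
  - split.
    + intros [k Hk]. exists (nth k l 0). split; [|exact Hk].
      apply nth_In. destruct (Nat.lt_ge_cases k (length l)) as [h|h]; [exact h|].
      rewrite nth_overflow in Hk by exact h. destruct (D_0 x Hk).
    + intros [d [Hd Hx]]. destruct (In_nth l d 0 Hd) as [k [_ <-]]. now exists k.
  - intros y k. eapply ev_comp; [|apply eval_pbit_unset].
    eval_steps; [apply eval_pconst|apply eval_pnth].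
Qed.

(* If [a] and [b] compute the codes of [f] and [g], then [qcomp a b] computes
   the code of [PComp f g], and similarly for the other constructors. *)
Definition qcomp (a b : prog) : prog := PPair (pconst 5) (PPair a b).
Definition qpair (a b : prog) : prog := PPair (pconst 6) (PPair a b).
Definition qrec (a b : prog) : prog := PPair (pconst 7) (PPair a b).
Definition qmu (a : prog) : prog := PPair (pconst 8) a.

Fixpoint pquote (p : prog) : prog :=
  match p with
  | PZero => PPair (pconst 0) (pconst 0)
  | PSucc => PPair (pconst 1) (pconst 0)
  | PId => PPair (pconst 2) (pconst 0)
  | PFst => PPair (pconst 3) (pconst 0)
  | PSnd => PPair (pconst 4) (pconst 0)
  | PComp f g => qcomp (pquote f) (pquote g)
  | PPair f g => qpair (pquote f) (pquote g)
  | PRec f g => qrec (pquote f) (pquote g)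
  | PMu f => qmu (pquote f)
  end.

Ltac eval_quote := repeat first [ apply ev_pair | apply eval_pconst ].

Lemma eval_qcomp a b f g x :
  eval a x (code f) -> eval b x (code g) -> eval (qcomp a b) x (code (PComp f g)).
Proof. intros. eval_quote; assumption. Qed.

Lemma eval_qpair a b f g x :
  eval a x (code f) -> eval b x (code g) -> eval (qpair a b) x (code (PPair f g)).
Proof. intros. eval_quote; assumption. Qed.

Lemma eval_qmu a f x : eval a x (code f) -> eval (qmu a) x (code (PMu f)).
Proof. intros. eval_quote; assumption. Qed.

Lemma eval_pquote p x : eval (pquote p) x (code p).
Proof. induction p; cbn [pquote code]; eval_quote; assumption. Qed.

Definition pquote_const : prog :=
  piter (pquote PZero) (qcomp (pquote PSucc) pacc).

Lemma eval_pquote_const c : eval pquote_const c (code (pconst c)).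
Proof.
  apply (eval_piter _ _ (fun c => code (pconst c))); [apply eval_pquote|].
  intro n. apply eval_qcomp; [apply eval_pquote|eval_steps].
Qed.

Definition pcode_punion : prog :=
  qmu (qcomp (pquote pbit_unset)
             (qpair (qcomp (pquote pnth) (qpair pquote_const (pquote PSnd)))
                    (pquote PFst))).

Lemma eval_pcode_punion c : eval pcode_punion c (code (punion c)).
Proof.
  apply eval_qmu, eval_qcomp; [apply eval_pquote|].
  apply eval_qpair; [|apply eval_pquote].
  apply eval_qcomp; [apply eval_pquote|].
  apply eval_qpair; [apply eval_pquote_const|apply eval_pquote].
Qed.

Section Stages.

Variable g : nat -> nat.

Fixpoint stages (n : nat) : list nat :=
  match n with 0 => [] | S n => g (code (punion (encode_list (stages n)))) :: stages n end.

Definition stage_index (n : nat) : nat := code (punion (encode_list (stages n))).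

Lemma In_stages d n : In d (stages n) <-> exists j, j < n /\ d = g (stage_index j).
Proof.
  induction n as [|n IH]; cbn [stages In].
  - split; [intros []|intros [j [Hj _]]; lia].
  - rewrite IH. split.
    + intros [<-|[j [Hj ->]]]; [exists n|exists j]; split; auto.
    + intros [j [Hj ->]]. destruct (Nat.eq_dec j n) as [->|Hne]; [now left|].
      right. exists j. split; [lia|reflexivity].
Qed.

Lemma W_stage_index n x :
  W (stage_index n) x <-> exists j, j < n /\ D (g (stage_index j)) x.
Proof.
  unfold stage_index at 1. rewrite W_punion. split.
  - intros [d [Hd Hx]]. apply In_stages in Hd as [j [Hj ->]]. eauto.
  - intros [j [Hj Hx]]. exists (g (stage_index j)). split; [|exact Hx].
    apply In_stages. eauto.
Qed.

Variable pg : prog.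
Hypothesis eval_pg : forall x, eval pg x (g x).

Definition pstages : prog := piter PZero (PPair (PComp pg (PComp pcode_punion pacc)) pacc).

Lemma eval_pstages n : eval pstages n (encode_list (stages n)).
Proof.
  apply (eval_piter _ _ (fun n => encode_list (stages n))); [constructor|].
  intro m. apply ev_pair; [|eval_steps].
  eapply ev_comp; [|apply eval_pg].
  eapply ev_comp; [|apply eval_pcode_punion]. eval_steps.
Qed.

Definition plimit : prog :=
  PMu (PComp pbit_unset (PPair (PComp pg (PComp pcode_punion (PComp pstages PSnd))) PFst)).

Lemma W_plimit x : W (code plimit) x <-> exists n, D (g (stage_index n)) x.
Proof.
  unfold plimit. apply (W_mu _ (fun x n => Nat.odd (g (stage_index n) / 2 ^ x))).
  intros y n. eapply ev_comp; [|apply eval_pbit_unset].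
  apply ev_pair; [|apply ev_fst].
  eapply ev_comp; [|apply eval_pg].
  unfold stage_index. eapply ev_comp; [|apply eval_pcode_punion].
  eapply ev_comp; [apply ev_snd|apply eval_pstages].
Qed.

Lemma W_stage_index_plimit n x : W (stage_index n) x -> W (code plimit) x.
Proof. rewrite W_stage_index, W_plimit. intros [j [_ Hx]]. eauto. Qed.

End Stages.

Section Quasicreative.

Variables (A : nat -> Prop) (g : nat -> nat).
Hypothesis g_productive : forall e, (forall x, W e x -> ~ A x) ->
  (forall z, D (g e) z -> ~ A z) /\ (exists z, D (g e) z /\ ~ A z /\ ~ W e z).

Lemma stage_index_disjoint n x : W (stage_index g n) x -> ~ A x.
Proof.
  revert x. induction n as [n IH] using lt_wf_ind. intros x Hx.
  apply W_stage_index in Hx as [j [Hj Hx]].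
  exact (proj1 (g_productive _ (IH j Hj)) x Hx).
Qed.

Lemma stage_index_grows n :
  exists l, length l = n /\ NoDup l /\ forall y, In y l -> W (stage_index g n) y.
Proof.
  induction n as [|n [l [Hlen [Hnd Hl]]]].
  - exists []. repeat split; [constructor|intros y []].
  - destruct (proj2 (g_productive _ (stage_index_disjoint n))) as [z [Hz [_ Hnew]]].
    exists (z :: l). repeat split.
    + simpl. lia.
    + constructor; [intro Hin; exact (Hnew (Hl z Hin))|exact Hnd].
    + intros y Hy. apply W_stage_index.
      destruct Hy as [<-|Hy]; [exists n; split; auto|].
      apply Hl, W_stage_index in Hy as [j [Hj Hx]]. exists j. split; [lia|exact Hx].
Qed.

End Quasicreative.

Lemma NoDup_exists_ge m (l : list nat) :
  NoDup l -> m < length l -> exists y, In y l /\ m <= y.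
Proof.
  intros Hnd Hlen. destruct (existsb (Nat.leb m) l) eqn:E.
  - apply existsb_exists in E as [y [Hy Hm]]. exists y. split; [exact Hy|].
    now apply Nat.leb_le.
  - assert (Hincl : incl l (seq 0 m)).
    { intros y Hy. apply in_seq. split; [lia|].
      destruct (Nat.lt_ge_cases y m) as [h|h]; [exact h|].
      apply Nat.leb_le in h. exfalso.
      assert (existsb (Nat.leb m) l = true) by (apply existsb_exists; eauto).
      congruence. }
    pose proof (NoDup_incl_length Hnd Hincl). rewrite length_seq in *. lia.
Qed.

Lemma infinite_set_of_NoDup (B : nat -> Prop) :
  (forall n, exists l, length l = n /\ NoDup l /\ forall y, In y l -> B y) ->
  infinite_set B.
Proof.
  intros HB m. destruct (HB (S m)) as [l [Hlen [Hnd Hl]]].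
  destruct (NoDup_exists_ge m l Hnd) as [y [Hy Hm]]; [lia|].
  exists y. split; [exact Hm|exact (Hl y Hy)].
Qed.

Theorem mainTheorem5 (A : nat -> Prop) :
  quasicreative A ->
  exists B : nat -> Prop,
    re B /\ (forall x, B x -> ~ A x) /\ infinite_set B.
Proof.
  intros [_ [g [g_computable g_productive]]].
  destruct (computable_eval g g_computable) as [pg eval_pg].
  exists (W (code (plimit pg))). split; [|split].
  - exists (code (plimit pg)). intro x. reflexivity.
  - intros x Hx. apply (W_plimit _ _ eval_pg) in Hx as [n Hx].
    exact (proj1 (g_productive _ (stage_index_disjoint A g g_productive n)) x Hx).
  - apply infinite_set_of_NoDup. intro n.
    destruct (stage_index_grows A g g_productive n) as [l [Hlen [Hnd Hl]]].
    exists l. split; [exact Hlen|split; [exact Hnd|]].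
    intros y Hy. exact (W_stage_index_plimit _ _ eval_pg n y (Hl y Hy)).
Qed.
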